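(* Let $P$ be a complex polynomial of degree $m\ge1$ and let $B\in C^\infty(\mathbb{R},\mathbb{C})$ be constant outside a compact set and such that $\operatorname{Range}(B)\cap P(\{z\in\mathbb{C}:P'(z)=0\})=\emptyset$. Then there exists $g\in C^\infty(\mathbb{R},\mathbb{C})$ with $P\circ g=B$. *)

From Stdlib Require Import Reals.
From Coquelicot Require Import Coquelicot.
Open Scope R_scope.

Definition poly_eval (a : nat -> C) (m : nat) (z : C) : C :=
  sum_n (fun k => (a k * Cpow z k)%C) m.

Definition poly_deriv_coef (a : nat -> C) : nat -> C :=
  fun k => (RtoC (INR (S k)) * a (S k))%C.

Definition smooth_RC (f : R -> C) : Prop :=
  exists D : nat -> R -> C,
    D 0%nat = f /\ forall (n : nat) (x : R), is_derive (D n) x (D (S n) x).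

Definition const_outside_compact (f : R -> C) : Prop :=
  exists (c : C) (M : R), forall x : R, M < Rabs x -> f x = c.

(* Since B avoids the critical values of P, the compactness of the range of B and the
   properness of P give one radius r > 0 such that, on the r-disc around any point z0 of the
   fibre of P over the range of B, the divided difference Q(u, v) = (P u - P v) / (u - v) stays
   within a third of P'(z0).  On such a disc P is injective and, by a contraction argument,
   onto a neighbourhood of P z0.  Cut R into cells shorter than the modulus of uniform
   continuity of B; starting left of the support of B, choose preimages of B at the grid
   points, each close to the previous one, and lift B on each cell through the local inverse
   of P near the cell's node.  Points of neighbouring cells are lifted into a common disc, so
   the lift g is continuous, and P (g y) - P (g x) = (g y - g x) Q (g y, g x) gives
   g' = B' / P'(g).  Hence every derivative of g is a polynomial in g, 1 / P'(g) and the
   derivatives of B, and g is smooth. *)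

From Stdlib Require Import Reals Lra Lia ZArith Classical ClassicalEpsilon.
From Coquelicot Require Import Coquelicot.
From mathcomp Require all_boot all_algebra Rstruct complex.
Open Scope R_scope.
Set Bullet Behavior "Strict Subproofs".

(** * Complex polynomials *)

(* The fundamental theorem of algebra, transported from mathcomp's [R[i]]. *)
Module ComplexClosed.
Import all_boot all_algebra Rstruct complex.

Definition to_C (u : R[i]) : C := (complex.Re u, complex.Im u).

Lemma to_C_add u v : to_C (u + v)%R = Cplus (to_C u) (to_C v).
Proof. by case: u => a b; case: v. Qed.

Lemma to_C_mul u v : to_C (u * v)%R = Cmult (to_C u) (to_C v).
Proof. by case: u => a b; case: v. Qed.

Lemma to_C_exp u n : to_C (u ^+ n)%R = Cpow (to_C u) n.
Proof. by elim: n => [|n IH] //; rewrite GRing.exprS to_C_mul IH. Qed.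

Lemma to_C_sum n (F : nat -> R[i]) :
  to_C (\sum_(i < n.+1) F i)%R = sum_n (fun i => to_C (F i)) n.
Proof.
elim: n => [|n IH]; first by rewrite big_ord1 sum_O.
by rewrite big_ord_recr sum_Sn -IH to_C_add.
Qed.

Lemma C_acf (p : nat -> C) n :
  exists z : C, Cpow z n.+1 = sum_n (fun i => Cmult (p i) (Cpow z i)) n.
Proof.
have [x Hx] := @complex_acf_axiom R n.+1 (fun i => Complex (p i).1 (p i).2) erefl.
exists (to_C x); rewrite -to_C_exp Hx.
rewrite (to_C_sum n (fun i => (Complex (p i).1 (p i).2 * x ^+ i)%R)).
by apply: sum_n_ext => i; rewrite to_C_mul to_C_exp; case: (p i).
Qed.

End ComplexClosed.

Fixpoint pow_ddiff (k : nat) (u v : C) : C :=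
  match k with O => 0%C | S k => (Cpow u k + v * pow_ddiff k u v)%C end.

Definition poly_ddiff (a : nat -> C) (m : nat) (u v : C) : C :=
  sum_n (fun k => a k * pow_ddiff k u v)%C m.

Lemma Cpow_sub k u v : (Cpow u k - Cpow v k = (u - v) * pow_ddiff k u v)%C.
Proof.
  induction k as [|k IH]; simpl; [ring|].
  replace (u * Cpow u k - v * Cpow v k)%C
    with (Cpow u k * (u - v) + v * (Cpow u k - Cpow v k))%C by ring.
  rewrite IH; ring.
Qed.

Lemma poly_eval_sub a m u v :
  (poly_eval a m u - poly_eval a m v = (u - v) * poly_ddiff a m u v)%C.
Proof.
  unfold poly_eval, poly_ddiff; induction m as [|m IH].
  - rewrite !sum_O; simpl; ring.
  - rewrite !sum_Sn; change plus with Cplus.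
    transitivity ((sum_n (fun k => a k * Cpow u k) m - sum_n (fun k => a k * Cpow v k) m)
      + a (S m) * (Cpow u (S m) - Cpow v (S m)))%C; [ring|].
    rewrite IH, Cpow_sub; ring.
Qed.

Lemma pow_ddiff_diag k z : pow_ddiff (S k) z z = (INR (S k) * Cpow z k)%C.
Proof.
  induction k as [|k IH]; [simpl; ring|].
  change (pow_ddiff (S (S k)) z z) with (Cpow z (S k) + z * pow_ddiff (S k) z z)%C.
  rewrite IH, (S_INR (S k)), RtoC_plus; simpl; ring.
Qed.

Lemma poly_ddiff_diag a m z :
  poly_ddiff a (S m) z z = poly_eval (poly_deriv_coef a) m z.
Proof.
  unfold poly_ddiff, poly_eval, poly_deriv_coef.
  induction m as [|m IH].
  - rewrite sum_Sn, !sum_O, pow_ddiff_diag; simpl; change plus with Cplus; ring.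
  - rewrite sum_Sn, IH, (sum_Sn _ m), pow_ddiff_diag; change plus with Cplus; ring.
Qed.

Lemma poly_eval_root (b : nat -> C) m : b (S m) <> 0%C -> exists z, poly_eval b (S m) z = 0%C.
Proof.
  intros Hb.
  destruct (ComplexClosed.C_acf (fun i => - b i / b (S m))%C m) as [z Hz].
  exists z; unfold poly_eval; rewrite sum_Sn, Hz.
  change (plus (sum_n (fun k => b k * Cpow z k)%C m)
    (mult (b (S m)) (sum_n (fun i => - b i / b (S m) * Cpow z i)%C m)) = zero).
  rewrite <- (sum_n_mult_l (K := C_Ring)), <- sum_n_plus, <- (sum_n_m_const_zero 0 m).
  apply sum_n_ext; intros i; change (b i * Cpow z i + b (S m) * (- b i / b (S m) * Cpow z i) = 0)%C.
  field; exact Hb.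
Qed.

Lemma poly_eval_surj (a : nat -> C) m w : a (S m) <> 0%C -> exists z, poly_eval a (S m) z = w.
Proof.
  intros Ha.
  set (b := fun i => match i with O => (a O - w)%C | S _ => a i end).
  destruct (poly_eval_root b m Ha) as [z Hz].
  exists z; apply Ceq_minus; rewrite <- Hz; clear Hz.
  unfold poly_eval; generalize (S m); intros n.
  induction n as [|n IH]; rewrite ?sum_O, ?sum_Sn, <- ?IH; simpl; change plus with Cplus; ring.
Qed.

(** * Continuity and differentiability of complex-valued functions *)

Lemma Cmod_sub_sym (x y : C) : Cmod (x - y) = Cmod (y - x).
Proof. rewrite <- Cmod_opp; f_equal; ring. Qed.

Lemma Cmod_sub_diag (z : C) : Cmod (z - z) = 0.
Proof. rewrite (proj1 (Ceq_minus z z) eq_refl); apply Cmod_0. Qed.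

Lemma Cmod_sub_triangle (x y z : C) : Cmod (x - z) <= Cmod (x - y) + Cmod (y - z).
Proof. replace (x - z)%C with ((x - y) + (y - z))%C by ring; apply Cmod_triangle. Qed.

Lemma Cmod_triangle_inv (x y : C) : Cmod x - Cmod y <= Cmod (x - y).
Proof.
  pose proof (Cmod_triangle (x - y) y); replace (x - y + y)%C with x in H by ring; lra.
Qed.

Section ComplexContinuity.
Context {U : UniformSpace}.

Lemma continuous_C_iff (f : U -> C) x :
  continuous f x <-> forall eps : posreal, locally x (fun y => Cmod (f y - f x) < eps).
Proof. apply (filterlim_locally_ball_norm (K := C_AbsRing) (U := C_NormedModule)). Qed.

(* Coquelicot equips [C] with two uniform structures, the product one and the one of the
   absolute ring [C_AbsRing]; they define the same continuity. *)
Lemma continuous_C_AbsRing (f : U -> C) x :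
  continuous f x <-> @continuous U (AbsRing_UniformSpace C_AbsRing) f x.
Proof.
  rewrite continuous_C_iff; symmetry.
  apply (filterlim_locally_ball_norm (U := AbsRing_NormedModule C_AbsRing)).
Qed.

Lemma continuous_Cplus (f g : U -> C) x :
  continuous f x -> continuous g x -> continuous (fun y => f y + g y)%C x.
Proof. apply (continuous_plus (V := C_NormedModule)). Qed.

Lemma continuous_Copp (f : U -> C) x :
  continuous f x -> continuous (fun y => - f y)%C x.
Proof. apply (continuous_opp (V := C_NormedModule)). Qed.

Lemma continuous_Cmult (f g : U -> C) x :
  continuous f x -> continuous g x -> continuous (fun y => f y * g y)%C x.
Proof. rewrite !continuous_C_AbsRing; apply (continuous_mult (K := C_AbsRing) f g). Qed.

Lemma continuous_Cpow (f : U -> C) x k :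
  continuous f x -> continuous (fun y => Cpow (f y) k) x.
Proof.
  intros Hf; induction k as [|k IH]; simpl.
  - apply continuous_const.
  - now apply continuous_Cmult.
Qed.

Lemma continuous_sum_n (f : nat -> U -> C) x n :
  (forall k, continuous (f k) x) -> continuous (fun y => sum_n (fun k => f k y) n) x.
Proof.
  intros Hf; induction n as [|n IH].
  - apply (continuous_ext (f O)); [intros y; now rewrite sum_O | apply Hf].
  - apply (continuous_ext (fun y => sum_n (fun k => f k y) n + f (S n) y))%C.
    + intros y; now rewrite sum_Sn.
    + now apply continuous_Cplus.
Qed.

Lemma continuous_Cinv (f : U -> C) x :
  continuous f x -> f x <> 0%C -> continuous (fun y => / f y)%C x.
Proof.
  intros Hf Hx; apply continuous_C_iff; intros eps.
  set (A := Cmod (f x)).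
  assert (HA : 0 < A) by now apply Cmod_gt_0.
  assert (Hd : 0 < Rmin (A / 2) (eps * A * A / 2)).
  { apply Rmin_pos; [lra|]. pose proof (cond_pos eps); apply Rdiv_lt_0_compat; [|lra].
    repeat apply Rmult_lt_0_compat; lra. }
  apply (filter_imp (fun y => Cmod (f y - f x) < mkposreal _ Hd));
    [|now apply continuous_C_iff].
  intros y Hy; simpl in Hy.
  pose proof (Rmin_l (A / 2) (eps * A * A / 2)); pose proof (Rmin_r (A / 2) (eps * A * A / 2)).
  assert (Hy0 : A / 2 < Cmod (f y)).
  { pose proof (Cmod_triangle_inv (f x) (f y)) as Hge; rewrite Cmod_sub_sym in Hge; fold A in Hge; lra. }
  assert (Hfy : f y <> 0%C) by (intros E; rewrite E, Cmod_0 in Hy0; lra).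
  replace (/ f y - / f x)%C with (- (f y - f x) / (f y * f x))%C by (field; tauto).
  rewrite Cmod_div, Cmod_opp, Cmod_mult by (apply Cmult_neq_0; auto); fold A.
  apply Rlt_div_l; [apply Rmult_lt_0_compat; lra|].
  apply (Rlt_le_trans _ (eps * A * A / 2)); [lra|].
  assert (0 < eps * A) by (pose proof (cond_pos eps); nra); nra.
Qed.

End ComplexContinuity.

Lemma locally_Cmod (P : C -> Prop) z :
  locally z P -> exists d : posreal, forall w, Cmod (w - z) < d -> P w.
Proof.
  intros [d Hd]; exists d; intros w Hw.
  now apply Hd, C_NormedModule_mixin_compat1.
Qed.

Lemma locally_Cmod2 (P : C * C -> Prop) z1 z2 :
  locally (z1, z2) P ->
  exists d : posreal, forall w1 w2, Cmod (w1 - z1) < d -> Cmod (w2 - z2) < d -> P (w1, w2).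
Proof.
  intros [d Hd]; exists d; intros w1 w2 H1 H2.
  now apply Hd; split; apply C_NormedModule_mixin_compat1.
Qed.

Lemma sqrt2_lt_2 : sqrt 2 < 2.
Proof. pose proof (sqrt_sqrt 2 ltac:(lra)); pose proof (sqrt_pos 2); nra. Qed.

Lemma ball_Cmod (z w : C) (eps : posreal) : ball z eps w -> Cmod (w - z) < 2 * eps.
Proof.
  intros H; apply C_NormedModule_mixin_compat2 in H.
  pose proof sqrt2_lt_2.
  change (Cmod (w - z) < sqrt 2 * eps) in H; pose proof (cond_pos eps); nra.
Qed.

Lemma Cmod_lt_2_components (z : C) e :
  Rabs (fst z) < e -> Rabs (snd z) < e -> Cmod z < 2 * e.
Proof.
  intros H1 H2; eapply Rle_lt_trans; [apply Cmod_2Rmax|].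
  pose proof sqrt2_lt_2.
  pose proof (Rabs_pos (fst z)); unfold Rmax; destruct Rle_dec; nra.
Qed.

Lemma continuous_poly_eval {U : UniformSpace} (a : nat -> C) m (f : U -> C) x :
  continuous f x -> continuous (fun y => poly_eval a m (f y)) x.
Proof.
  intros Hf; apply (continuous_sum_n (fun k y => a k * Cpow (f y) k)%C); intros k.
  apply continuous_Cmult; [apply continuous_const | now apply continuous_Cpow].
Qed.

Lemma continuous_poly_ddiff {U : UniformSpace} (a : nat -> C) m (f g : U -> C) x :
  continuous f x -> continuous g x -> continuous (fun y => poly_ddiff a m (f y) (g y)) x.
Proof.
  intros Hf Hg; apply (continuous_sum_n (fun k y => a k * pow_ddiff k (f y) (g y))%C).
  intros k; apply continuous_Cmult; [apply continuous_const|].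
  induction k as [|k IH]; simpl; [apply continuous_const|].
  apply continuous_Cplus; [now apply continuous_Cpow | now apply continuous_Cmult].
Qed.

(* The normed-module structure inferred on [C] in [is_derive] for maps [R -> C]. *)
Local Notation C_R := (prod_NormedModule R_AbsRing R_NormedModule R_NormedModule).

Lemma norm_C (z : C) : @norm R_AbsRing C_R z = Cmod z.
Proof.
  change (sqrt (Rabs (fst z) ^ 2 + Rabs (snd z) ^ 2) = Cmod z).
  unfold Cmod; now rewrite !pow2_abs.
Qed.

Lemma is_derive_C_iff (f : R -> C) x (l : C) :
  is_derive f x l <->
  forall eps : posreal,
    locally x (fun y => Cmod (f y - f x - RtoC (y - x) * l) <= eps * Rabs (y - x)).
Proof.
  assert (Hscal : forall h : R, scal h l = (h * l)%C).
  { intros h; apply injective_projections; simpl; unfold scal, mult; simpl; unfold mult; simpl;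
      ring. }
  split.
  - intros [_ H] eps; generalize (H x (fun P HP => HP) eps); apply filter_imp; intros y.
    now rewrite norm_C, Hscal.
  - intros H; split; [apply is_linear_scal_l|].
    intros x' Hx'; apply (@is_filter_lim_locally_unique _ R_NormedModule) in Hx'; subst x'.
    intros eps; generalize (H eps); apply filter_imp; intros y.
    now rewrite norm_C, Hscal.
Qed.

Lemma is_derive_continuous (f : R -> C) x (l : C) : is_derive f x l -> continuous f x.
Proof.
  intros Hf.
  exact (@ex_derive_continuous R_AbsRing C_R f x (ex_intro _ l Hf)).
Qed.

Lemma is_derive_sub_mult (u k : R -> C) x (du : C) :
  is_derive u x du -> continuous k x ->
  is_derive (fun y => (u y - u x) * k y)%C x (du * k x)%C.
Proof.
  intros Hu Hk; apply is_derive_C_iff; intros eps.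
  set (K := Cmod (k x) + Cmod du + 1).
  assert (HK : 1 <= K) by (unfold K; pose proof (Cmod_ge_0 (k x)); pose proof (Cmod_ge_0 du); lra).
  assert (He : 0 < Rmin 1 (eps / (2 * K))).
  { apply Rmin_pos; [lra|]; pose proof (cond_pos eps); apply Rdiv_lt_0_compat; lra. }
  set (e := mkposreal _ He).
  assert (He1 : e <= 1) by apply Rmin_l.
  assert (HeK : e * K <= eps / 2).
  { apply (Rle_trans _ (eps / (2 * K) * K)); [apply Rmult_le_compat_r; [lra|apply Rmin_r]|].
    right; field; lra. }
  generalize (filter_and _ _ (proj1 (is_derive_C_iff u x du) Hu e)
                (proj1 (continuous_C_iff k x) Hk e)).
  apply filter_imp; intros y [Huy Hky].
  replace ((u y - u x) * k y - (u x - u x) * k x - RtoC (y - x) * (du * k x))%C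
    with ((u y - u x - RtoC (y - x) * du) * k y + RtoC (y - x) * du * (k y - k x))%C by ring.
  eapply Rle_trans; [apply Cmod_triangle|]; rewrite !Cmod_mult, Cmod_R.
  assert (Hky' : Cmod (k y) <= Cmod (k x) + 1).
  { pose proof (Cmod_triangle_inv (k y) (k x)); lra. }
  pose proof (Rabs_pos (y - x)); pose proof (Cmod_ge_0 du); pose proof (Cmod_ge_0 (k y)).
  pose proof (Cmod_ge_0 (u y - u x - RtoC (y - x) * du)); pose proof (Cmod_ge_0 (k y - k x)).
  assert (Cmod (u y - u x - RtoC (y - x) * du) * Cmod (k y) <= e * Rabs (y - x) * K)
    by (apply Rmult_le_compat; unfold K; lra).
  assert (Rabs (y - x) * Cmod du * Cmod (k y - k x) <= Rabs (y - x) * K * e).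
  { apply Rmult_le_compat; try lra; [apply Rmult_le_pos; lra|].
    apply Rmult_le_compat_l; unfold K; lra. }
  nra.
Qed.

Lemma is_derive_C_const (c : C) x : is_derive (fun _ : R => c) x (RtoC 0).
Proof. exact (@is_derive_const R_AbsRing C_R c x). Qed.

Lemma is_derive_C_ext (f g : R -> C) x (l : C) :
  (forall y, f y = g y) -> is_derive f x l -> is_derive g x l.
Proof. exact (is_derive_ext f g x l). Qed.

Lemma is_derive_Cplus (f g : R -> C) x (df dg : C) :
  is_derive f x df -> is_derive g x dg -> is_derive (fun y => f y + g y)%C x (df + dg)%C.
Proof. exact (is_derive_plus f g x df dg). Qed.

Lemma is_derive_factor (f u k : R -> C) x (du : C) :
  is_derive u x du -> continuous k x ->
  locally x (fun y => f y = f x + (u y - u x) * k y)%C ->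
  is_derive f x (du * k x)%C.
Proof.
  intros Hu Hk Hf.
  apply (is_derive_ext_loc (fun y => f x + (u y - u x) * k y)%C).
  - generalize Hf; apply filter_imp; intros y Hy; now rewrite Hy.
  - replace (du * k x)%C with (0 + du * k x)%C by ring.
    apply is_derive_Cplus; [apply is_derive_C_const | now apply is_derive_sub_mult].
Qed.

Lemma is_derive_Cmult (f g : R -> C) x (df dg : C) :
  is_derive f x df -> is_derive g x dg ->
  is_derive (fun y => f y * g y)%C x (df * g x + f x * dg)%C.
Proof.
  intros Hf Hg.
  apply (is_derive_C_ext (fun y => f x * g x + ((f y - f x) * g y + (g y - g x) * f x)))%C.
  { intros y; ring. }
  replace (df * g x + f x * dg)%C with (0 + (df * g x + dg * f x))%C by ring.
  apply is_derive_Cplus; [apply is_derive_C_const|].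
  apply is_derive_Cplus.
  - apply is_derive_sub_mult; [exact Hf|].
    now apply (is_derive_continuous g x dg).
  - apply (is_derive_sub_mult g (fun _ => f x)); [exact Hg | apply continuous_const].
Qed.

Lemma is_derive_Cinv (f : R -> C) x (df : C) :
  is_derive f x df -> f x <> 0%C ->
  is_derive (fun y => / f y)%C x (- df / (f x * f x))%C.
Proof.
  intros Hf Hx.
  assert (Hc := is_derive_continuous f x df Hf).
  replace (- df / (f x * f x))%C with (df * (- (/ f x * / f x)))%C by (field; exact Hx).
  apply (is_derive_factor _ f (fun y => - (/ f y * / f x))%C); [exact Hf| |].
  - apply continuous_Copp, continuous_Cmult; [now apply continuous_Cinv | apply continuous_const].
  - generalize (proj1 (continuous_C_iff f x) Hc (mkposreal _ (proj1 (Cmod_gt_0 _) Hx))).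
    apply filter_imp; intros y Hy; simpl in Hy.
    assert (Hy0 : f y <> 0%C).
    { intros E; rewrite E, Cmod_sub_sym in Hy; replace (f x - 0)%C with (f x) in Hy by ring; lra. }
    field; split; assumption.
Qed.

Lemma is_derive_poly_eval_comp (c : nat -> C) k (f : R -> C) x (df : C) :
  is_derive f x df ->
  is_derive (fun y => poly_eval c k (f y)) x (df * poly_ddiff c k (f x) (f x))%C.
Proof.
  intros Hf.
  apply (is_derive_factor _ f (fun y => poly_ddiff c k (f y) (f x))); [exact Hf| |].
  - apply continuous_poly_ddiff; [exact (is_derive_continuous f x df Hf) | apply continuous_const].
  - apply filter_forall; intros y; rewrite <- poly_eval_sub; ring.
Qed.

(** * Continuous functions constant outside a compact set *)

Lemma continuous_Cmod_sub {U : UniformSpace} (f : U -> C) w x :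
  continuous f x -> continuous (fun y => Cmod (f y - w)) x.
Proof.
  intros Hf; apply filterlim_locally; intros eps.
  generalize (proj1 (continuous_C_iff f x) Hf eps); apply filter_imp; intros y Hy.
  change (Rabs (Cmod (f y - w) - Cmod (f x - w)) < eps); apply Rabs_def1.
  - pose proof (Cmod_triangle_inv (f y - w) (f x - w))%C.
    replace (f y - w - (f x - w))%C with (f y - f x)%C in H by ring; lra.
  - pose proof (Cmod_triangle_inv (f x - w) (f y - w))%C.
    replace (f x - w - (f y - w))%C with (f x - f y)%C in H by ring.
    rewrite (Cmod_sub_sym (f x) (f y)) in H; lra.
Qed.

Section ConstantOutsideCompact.
Variables (f : R -> C) (c : C) (M : R).
Hypothesis f_cont : forall x, continuous f x.
Hypothesis f_const : forall x, M < Rabs x -> f x = c.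

Let L := Rabs M + 1.

Lemma const_outside_eq x : L <= Rabs x -> f x = f L.
Proof.
  intros Hx; pose proof (Rle_abs M); pose proof (Rabs_pos M).
  assert (HL : Rabs L = L) by (apply Rabs_right; unfold L; lra).
  rewrite !f_const; [easy | rewrite HL |]; unfold L in *; lra.
Qed.

Lemma const_outside_left x : x <= - L -> f x = f (- L).
Proof.
  intros Hx; assert (HL : 0 < L) by (unfold L; pose proof (Rabs_pos M); lra).
  rewrite (const_outside_eq x), (const_outside_eq (- L)); [easy | |]; rewrite Rabs_left; lra.
Qed.

Lemma Cmod_sub_extrema w :
  exists xmin xmax, forall x, Cmod (f xmin - w) <= Cmod (f x - w) <= Cmod (f xmax - w).
Proof.
  assert (HL : - L <= L) by (unfold L; pose proof (Rabs_pos M); lra).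
  assert (Hc : forall y, - L <= y <= L -> continuous (fun y => Cmod (f y - w)) y)
    by (intros y _; now apply continuous_Cmod_sub).
  destruct (continuous_ab_min_consistent _ _ _ HL Hc) as [xmin [Hmin Hxmin]].
  destruct (continuous_ab_maj_consistent _ _ _ HL Hc) as [xmax [Hmax Hxmax]].
  exists xmin, xmax; intros x.
  destruct (Rle_lt_dec L (Rabs x)) as [Hx|Hx].
  - rewrite (const_outside_eq x Hx); split; [apply Hmin | apply Hmax]; lra.
  - apply Rabs_def2 in Hx; split; [apply Hmin | apply Hmax]; lra.
Qed.

Lemma const_outside_bounded : exists K, forall x, Cmod (f x) <= K.
Proof.
  destruct (Cmod_sub_extrema 0) as [xmin [xmax H]]; exists (Cmod (f xmax - 0)); intros x.
  replace (f x) with (f x - 0)%C by ring; apply H.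
Qed.

Lemma const_outside_avoids w :
  (forall x, f x <> w) -> exists eta, 0 < eta /\ forall x, eta <= Cmod (f x - w).
Proof.
  intros Hw; destruct (Cmod_sub_extrema w) as [xmin [xmax H]].
  exists (Cmod (f xmin - w)); split; [|apply H].
  apply Cmod_gt_0; intros E; apply (Hw xmin), Ceq_minus, E.
Qed.

Lemma const_outside_unif_cont (eps : posreal) :
  exists delta : posreal, forall x y, Rabs (x - y) < delta -> Cmod (f x - f y) < eps.
Proof.
  assert (He : 0 < eps / 2) by (pose proof (cond_pos eps); lra).
  destruct (unifcont_1d f (- (L + 1)) (L + 1) (fun x _ => f_cont x) (mkposreal _ He))
    as [delta Hdelta].
  assert (Hd : 0 < Rmin delta 1) by (apply Rmin_pos; [apply cond_pos | lra]).
  exists (mkposreal _ Hd); simpl; intros x y Hxy.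
  assert (Hxy1 : Rabs (x - y) < delta) by (eapply Rlt_le_trans; [exact Hxy | apply Rmin_l]).
  assert (Hxy2 : Rabs (x - y) < 1) by (eapply Rlt_le_trans; [exact Hxy | apply Rmin_r]).
  assert (Houter : L <= Rabs x -> L <= Rabs y -> Cmod (f x - f y) < eps).
  { intros; rewrite (const_outside_eq x), (const_outside_eq y), Cmod_sub_diag by assumption.
    apply cond_pos. }
  pose proof (Rabs_triang_inv x y); pose proof (Rabs_triang_inv y x).
  rewrite (Rabs_minus_sym y x) in *.
  destruct (Rle_lt_dec (Rabs x) (L + 1)) as [Hx|Hx];
    [destruct (Rle_lt_dec (Rabs y) (L + 1)) as [Hy|Hy]|]; [|apply Houter; lra ..].
  apply Rabs_le_between in Hx; apply Rabs_le_between in Hy.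
  apply NNPP; intros Hn; apply (Hdelta y x); try lra; [exact Hxy1|].
  intros Hb; apply Hn; apply ball_Cmod in Hb; simpl in Hb; lra.
Qed.

End ConstantOutsideCompact.

(** * A uniform radius of invertibility *)

Lemma sum_n_nonneg (f : nat -> R) n : (forall k, 0 <= f k) -> 0 <= sum_n f n.
Proof.
  intros Hf; induction n as [|n IH]; [now rewrite sum_O|].
  rewrite sum_Sn; pose proof (Hf (S n)); change plus with Rplus; lra.
Qed.

Lemma Cmod_poly_eval_le (b : nat -> C) n z : 1 <= Cmod z ->
  Cmod (poly_eval b n z) <= sum_n (fun k => Cmod (b k)) n * Cmod z ^ n.
Proof.
  intros Hz; unfold poly_eval; induction n as [|n IH].
  - rewrite !sum_O; simpl; rewrite Cmod_mult, Cmod_1; lra.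
  - rewrite sum_Sn; change plus with Cplus; rewrite sum_Sn; change plus with Rplus.
    eapply Rle_trans; [apply Cmod_triangle|]; rewrite Cmod_mult, Cmod_pow.
    assert (0 <= sum_n (fun k => Cmod (b k)) n) by (apply sum_n_nonneg; intros; apply Cmod_ge_0).
    assert (Cmod z ^ n <= Cmod z ^ S n) by (apply Rle_pow; lia || lra).
    pose proof (Cmod_ge_0 (b (S n))); nra.
Qed.

Lemma poly_eval_coercive (a : nat -> C) m K : a (S m) <> 0%C ->
  exists R0, forall z, Cmod (poly_eval a (S m) z) <= K -> Cmod z <= R0.
Proof.
  intros Ha.
  set (A := sum_n (fun k => Cmod (a k)) m).
  assert (HA : 0 <= A) by (apply sum_n_nonneg; intros; apply Cmod_ge_0).
  assert (Hlead : 0 < Cmod (a (S m))) by now apply Cmod_gt_0.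
  exists (Rmax 1 ((K + A) / Cmod (a (S m)))); intros z Hz.
  assert (HK : 0 <= K) by (eapply Rle_trans; [apply Cmod_ge_0 | exact Hz]).
  apply Rnot_lt_le; intros Hbig.
  assert (Hz1 : 1 < Cmod z) by (eapply Rle_lt_trans; [apply Rmax_l | exact Hbig]).
  assert (HzK : K + A < Cmod z * Cmod (a (S m))).
  { apply Rlt_div_l; [lra | eapply Rle_lt_trans; [apply Rmax_r | exact Hbig]]. }
  unfold poly_eval in Hz; rewrite sum_Sn in Hz; change plus with Cplus in Hz.
  pose proof (Cmod_poly_eval_le a m z (Rlt_le _ _ Hz1)) as Hlow; fold A in Hlow.
  pose proof (Cmod_triangle_inv (a (S m) * Cpow z (S m)) (- poly_eval a m z))%C as Htri.
  replace (a (S m) * Cpow z (S m) - - poly_eval a m z)%C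
    with (poly_eval a m z + a (S m) * Cpow z (S m))%C in Htri by ring.
  rewrite Cmod_opp, Cmod_mult, Cmod_pow in Htri.
  change (Cmod z ^ S m) with (Cmod z * Cmod z ^ m) in Htri.
  assert (1 <= Cmod z ^ m) by (apply pow_R1_Rle; lra).
  assert (0 <= (Cmod z ^ m - 1) * (Cmod z * Cmod (a (S m)) - A)) by (apply Rmult_le_pos; lra).
  unfold poly_eval in *; nra.
Qed.

Definition ddiff_controlled (a : nat -> C) (m : nat) (r : R) (z0 : C) : Prop :=
  r <= Cmod (poly_ddiff a m z0 z0) /\
  forall z z', Cmod (z - z0) < r -> Cmod (z' - z0) < r ->
    Cmod (poly_ddiff a m z z' - poly_ddiff a m z0 z0) <= Cmod (poly_ddiff a m z0 z0) / 3.

Lemma ddiff_controlled_le a m r r' z0 :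
  r' <= r -> ddiff_controlled a m r z0 -> ddiff_controlled a m r' z0.
Proof.
  intros Hr [H1 H2]; split; [lra|]; intros z z' Hz Hz'; apply H2; lra.
Qed.

Section UniformRadius.
Variables (a : nat -> C) (m : nat) (B : R -> C) (c : C) (M : R).
Hypothesis a_lead : a (S m) <> 0%C.
Hypothesis B_cont : forall x, continuous B x.
Hypothesis B_const : forall x, M < Rabs x -> B x = c.
Hypothesis B_noncritical :
  forall x z, poly_ddiff a (S m) z z = 0%C -> B x <> poly_eval a (S m) z.

Let P := poly_eval a (S m).
Let Q := poly_ddiff a (S m).

(* The factor 2 absorbs the passage from the coordinate boxes of [compactness_value_2d]
   to discs.  Near a critical point the claim is vacuous: its image lies at positive
   distance from the range of [B]. *)
Lemma controlled_near (zt : C) :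
  exists d : posreal, forall x z0, P z0 = B x -> Cmod (z0 - zt) < 2 * d ->
    ddiff_controlled a (S m) d z0.
Proof.
  destruct (Ceq_dec (Q zt zt) 0) as [Hcrit|Hreg].
  - destruct (const_outside_avoids B c M B_cont B_const (P zt)) as [eta [Heta Hdist]].
    { intros x; now apply B_noncritical. }
    destruct (locally_Cmod _ _ (proj1 (continuous_C_iff _ zt)
                (continuous_poly_eval a (S m) (fun z => z) zt (continuous_id zt))
                (mkposreal _ Heta))) as [d0 Hd0].
    exists (pos_div_2 d0); intros x z0 Hz0 Hclose; exfalso; simpl in Hclose.
    specialize (Hd0 z0 ltac:(lra)); specialize (Hdist x); simpl in Hd0.
    fold P in Hd0; rewrite <- Hz0 in Hdist; lra.
  - set (p := Cmod (Q zt zt)).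
    assert (Hp : 0 < p) by now apply Cmod_gt_0.
    assert (Hcont : continuous (fun w : C * C => Q (fst w) (snd w)) (zt, zt))
      by (apply continuous_poly_ddiff; [apply continuous_fst | apply continuous_snd]).
    assert (Hp10 : 0 < p / 10) by lra.
    destruct (locally_Cmod2 _ _ _ (proj1 (continuous_C_iff _ _) Hcont (mkposreal _ Hp10)))
      as [d0 Hd0]; simpl in Hd0.
    assert (Hd : 0 < Rmin (d0 / 3) (p / 2)) by (apply Rmin_pos; pose proof (cond_pos d0); lra).
    exists (mkposreal _ Hd); simpl; intros x z0 _ Hclose.
    assert (Hd1 : Rmin (d0 / 3) (p / 2) <= d0 / 3) by apply Rmin_l.
    assert (Hd2 : Rmin (d0 / 3) (p / 2) <= p / 2) by apply Rmin_r.
    assert (H0 : Cmod (Q z0 z0 - Q zt zt) < p / 10) by (apply (Hd0 z0 z0); lra).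
    assert (H0' : 9 * p / 10 <= Cmod (Q z0 z0)).
    { pose proof (Cmod_triangle_inv (Q zt zt) (Q z0 z0)); rewrite Cmod_sub_sym in H; fold p in H; lra. }
    split; [fold Q; lra|]; intros z z' Hz Hz'.
    assert (Hzt : Cmod (z - zt) < d0) by (pose proof (Cmod_sub_triangle z z0 zt); lra).
    assert (Hzt' : Cmod (z' - zt) < d0) by (pose proof (Cmod_sub_triangle z' z0 zt); lra).
    specialize (Hd0 z z' Hzt Hzt').
    pose proof (Cmod_sub_triangle (Q z z') (Q zt zt) (Q z0 z0)) as Htri.
    rewrite (Cmod_sub_sym (Q zt zt)) in Htri; fold Q; lra.
Qed.

Lemma uniform_controlled_radius :
  exists r, 0 < r /\ forall x z0, P z0 = B x -> ddiff_controlled a (S m) r z0.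
Proof.
  destruct (const_outside_bounded B c M B_cont B_const) as [K HK].
  destruct (poly_eval_coercive a m K a_lead) as [R0 HR0].
  destruct (choice _ (fun t : R * R => controlled_near t)) as [delta Hdelta].
  destruct (compactness_value_2d (- R0) R0 (- R0) R0 (fun u v => delta (u, v))) as [d Hd].
  exists d; split; [apply cond_pos|]; intros x z0 Hz0.
  assert (Hb : Cmod z0 <= R0) by (apply HR0; fold P; rewrite Hz0; apply HK).
  pose proof (Rmax_Cmod z0) as Hcomp.
  pose proof (Rmax_l (Rabs (fst z0)) (Rabs (snd z0))).
  pose proof (Rmax_r (Rabs (fst z0)) (Rabs (snd z0))).
  apply NNPP; intros Hn; apply (Hd (fst z0) (snd z0)); try (apply Rabs_le_between; lra).
  intros [u [v [_ [_ [Hu [Hv Hdu]]]]]]; apply Hn.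
  apply (ddiff_controlled_le _ _ (delta (u, v))); [exact Hdu|].
  apply (Hdelta (u, v) x z0 Hz0), Cmod_lt_2_components; exact Hu || exact Hv.
Qed.

End UniformRadius.

(** * Local inversion *)

Section Contraction.
Variables (T : C -> C) (z0 : C) (s q : R).
Hypothesis s_nonneg : 0 <= s.
Hypothesis q_range : 0 <= q < 1.
Hypothesis T_lip : forall z z', Cmod (z - z0) <= s -> Cmod (z' - z0) <= s ->
  Cmod (T z - T z') <= q * Cmod (z - z').
Hypothesis T_maps : forall z, Cmod (z - z0) <= s -> Cmod (T z - z0) <= s.

Fixpoint iterate (n : nat) : C := match n with O => z0 | S n => T (iterate n) end.

Let D := Cmod (T z0 - z0).

Lemma iterate_in_ball n : Cmod (iterate n - z0) <= s.
Proof.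
  induction n as [|n IH]; simpl; [|now apply T_maps].
  now rewrite Cmod_sub_diag.
Qed.

Lemma iterate_step n : Cmod (iterate (S n) - iterate n) <= q ^ n * D.
Proof.
  induction n as [|n IH]; simpl; [unfold D; lra|].
  eapply Rle_trans; [apply (T_lip _ _ (iterate_in_ball (S n)) (iterate_in_ball n))|].
  simpl pow; rewrite Rmult_assoc; apply Rmult_le_compat_l; [lra | exact IH].
Qed.

Lemma iterate_tail N j :
  Cmod (iterate (N + j) - iterate N) <= q ^ N * D * (1 - q ^ j) / (1 - q).
Proof.
  induction j as [|j IH].
  - rewrite Nat.add_0_r, Cmod_sub_diag; simpl.
    replace (1 - 1) with 0 by ring; rewrite Rmult_0_r; unfold Rdiv; rewrite Rmult_0_l; lra.
  - replace (N + S j)%nat with (S (N + j)) by lia.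
    eapply Rle_trans; [apply (Cmod_sub_triangle _ (iterate (N + j)))|].
    pose proof (iterate_step (N + j)) as Hstep; rewrite pow_add in Hstep.
    replace (q ^ N * D * (1 - q ^ S j) / (1 - q))
      with (q ^ N * D * (1 - q ^ j) / (1 - q) + q ^ N * q ^ j * D) by (simpl; field; lra).
    lra.
Qed.

Lemma iterate_cauchy N n : (N <= n)%nat -> Cmod (iterate n - iterate N) <= q ^ N * D / (1 - q).
Proof.
  intros HNn; replace n with (N + (n - N))%nat by lia.
  eapply Rle_trans; [apply iterate_tail|].
  assert (0 <= q ^ N * D) by (apply Rmult_le_pos; [apply pow_le; lra | apply Cmod_ge_0]).
  assert (0 <= q ^ (n - N)) by (apply pow_le; lra).
  apply Rmult_le_compat_r; [apply Rlt_le, Rinv_0_lt_compat; lra | nra].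
Qed.

Lemma iterate_tail_small eps : 0 < eps ->
  exists N, forall n, (N <= n)%nat -> Cmod (iterate n - iterate N) < eps.
Proof.
  intros He.
  assert (HD : 0 <= D) by apply Cmod_ge_0.
  destruct (pow_lt_1_zero q ltac:(rewrite Rabs_right; lra) (eps * (1 - q) / (D + 1)))
    as [N HN]; [apply Rdiv_lt_0_compat; nra|].
  exists N; intros n Hn; eapply Rle_lt_trans; [now apply iterate_cauchy|].
  specialize (HN N (le_n N)); rewrite Rabs_right in HN by (apply Rle_ge, pow_le; lra).
  apply Rlt_div_l; [lra|].
  apply (Rle_lt_trans _ (q ^ N * (D + 1))); [pose proof (pow_le q N); nra|].
  apply Rlt_div_r in HN; lra.
Qed.

Lemma iterate_limit :
  exists l, forall eps : posreal, exists N, forall n, (N <= n)%nat -> Cmod (iterate n - l) < eps.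
Proof.
  set (F := filtermap iterate eventually).
  assert (HF : cauchy F).
  { intros eps; destruct (iterate_tail_small eps (cond_pos eps)) as [N HN].
    exists (iterate N); exists N; intros n Hn.
    now apply C_NormedModule_mixin_compat1, HN. }
  exists (@lim C_R_CompleteNormedModule F); intros eps.
  destruct (@complete_cauchy C_R_CompleteNormedModule F _ HF (pos_div_2 eps)) as [N HN].
  exists N; intros n Hn; specialize (HN n Hn); apply ball_Cmod in HN; simpl in HN; lra.
Qed.

Lemma contraction_fixpoint : exists z, Cmod (z - z0) <= s /\ T z = z.
Proof.
  destruct iterate_limit as [l Hl]; exists l.
  assert (Hin : Cmod (l - z0) <= s).
  { apply Rnot_lt_le; intros Hlt.
    destruct (Hl (mkposreal _ (proj2 (Rlt_0_minus _ _) Hlt))) as [N HN]; simpl in HN.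
    specialize (HN N (le_n N)); pose proof (iterate_in_ball N).
    pose proof (Cmod_sub_triangle l (iterate N) z0); rewrite Cmod_sub_sym in HN; lra. }
  split; [exact Hin|].
  apply Ceq_minus, Cmod_eq_0, Rle_antisym; [|apply Cmod_ge_0].
  apply Rnot_lt_le; intros Hlt.
  destruct (Hl (pos_div_2 (mkposreal _ Hlt))) as [N HN]; simpl in HN.
  pose proof (HN N (le_n N)); pose proof (HN (S N) (le_S _ _ (le_n N))); simpl in H0.
  pose proof (T_lip l (iterate N) Hin (iterate_in_ball N)).
  pose proof (Cmod_sub_triangle (T l) (T (iterate N)) l).
  rewrite (Cmod_sub_sym l) in H1; pose proof (Cmod_ge_0 (iterate N - l)); nra.
Qed.

End Contraction.

Section LocalInverse.
Variables (a : nat -> C) (m : nat) (r : R) (z0 : C).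
Hypothesis r_pos : 0 < r.
Hypothesis controlled : ddiff_controlled a m r z0.

Let P := poly_eval a m.
Let Q := poly_ddiff a m.
Let c0 := Q z0 z0.

Lemma ddiff_controlled_neq0 : c0 <> 0%C.
Proof.
  intros E; pose proof (proj1 controlled) as H; fold Q c0 in H; rewrite E, Cmod_0 in H; lra.
Qed.

Lemma ddiff_controlled_ratio z z' : Cmod (z - z0) < r -> Cmod (z' - z0) < r ->
  Cmod (1 - Q z z' / c0) <= / 3.
Proof.
  intros Hz Hz'; pose proof (proj2 controlled z z' Hz Hz') as H; fold Q c0 in H.
  pose proof (proj1 controlled) as Hc0; fold Q c0 in Hc0; pose proof ddiff_controlled_neq0.
  replace (1 - Q z z' / c0)%C with (- (Q z z' - c0) / c0)%C by (field; assumption).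
  rewrite Cmod_div, Cmod_opp by assumption.
  apply Rle_div_l; lra.
Qed.

Lemma local_lower_lipschitz z z' : Cmod (z - z0) < r -> Cmod (z' - z0) < r ->
  2 * r / 3 * Cmod (z - z') <= Cmod (P z - P z').
Proof.
  intros Hz Hz'; unfold P; rewrite poly_eval_sub, Cmod_mult.
  rewrite (Rmult_comm (Cmod (z - z'))).
  apply Rmult_le_compat_r; [apply Cmod_ge_0|].
  pose proof (proj2 controlled z z' Hz Hz') as Hclose; pose proof (proj1 controlled) as Hc0.
  pose proof (Cmod_triangle_inv c0 (Q z z')) as Htri; rewrite Cmod_sub_sym in Htri.
  fold Q c0 in Hclose, Hc0, Htri |- *; lra.
Qed.

Lemma local_surj w : Cmod (w - P z0) < r * r / 6 ->
  exists z, Cmod (z - z0) < r / 2 /\ P z = w.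
Proof.
  intros Hw.
  pose proof (proj1 controlled) as Hc0; fold Q c0 in Hc0; pose proof ddiff_controlled_neq0 as H0.
  (* Newton's map with the slope frozen at [c0 = P'(z0)]: a 1/3-contraction of the disc of
     radius [r / 3], which it maps into itself since [Cmod (w - P z0) / Cmod c0 < r / 6]. *)
  set (T z := (z - (P z - w) / c0)%C).
  assert (HT : forall z z', (T z - T z' = (z - z') * (1 - Q z z' / c0))%C).
  { intros z z'; pose proof (poly_eval_sub a m z z') as E; fold P Q in E; unfold T.
    replace (P z) with (P z' + (z - z') * Q z z')%C by (rewrite <- E; ring).
    field; exact H0. }
  destruct (contraction_fixpoint T z0 (r / 3) (/ 3)) as [zf [Hzf Hfix]]; [lra | lra | | |].
  - intros z z' Hz Hz'; rewrite HT, Cmod_mult, Rmult_comm.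
    apply Rmult_le_compat_r; [apply Cmod_ge_0 | apply ddiff_controlled_ratio; lra].
  - intros z Hz.
    replace (T z - z0)%C with (T z - T z0 + (w - P z0) / c0)%C by (unfold T; field; exact H0).
    eapply Rle_trans; [apply Cmod_triangle|]; rewrite HT, Cmod_mult, Cmod_div by exact H0.
    assert (Cmod (1 - Q z z0 / c0) <= / 3)
      by (apply ddiff_controlled_ratio; rewrite ?Cmod_sub_diag; lra).
    assert (Cmod (w - P z0) / Cmod c0 <= r / 6) by (apply Rle_div_l; nra).
    pose proof (Cmod_ge_0 (z - z0)); nra.
  - exists zf; split; [lra|].
    apply Ceq_minus; replace (P zf - w)%C with (c0 * (zf - T zf))%C by (unfold T; field; exact H0).
    rewrite Hfix; ring.
Qed.

End LocalInverse.

(** * Lifting [B] through [P] *)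

Section Lifting.
Variables (a : nat -> C) (m : nat) (B : R -> C) (x0 r delta : R) (z_start : C).
Hypothesis r_pos : 0 < r.
Hypothesis delta_pos : 0 < delta.
Hypothesis B_cont : forall x, continuous B x.
Hypothesis B_const_left : forall x, x <= x0 -> B x = B x0.
Hypothesis B_unif : forall x y, Rabs (x - y) < delta -> Cmod (B x - B y) < r * r / 6.
Hypothesis controlled :
  forall x z, poly_eval a m z = B x -> ddiff_controlled a m r z.
Hypothesis z_start_spec : poly_eval a m z_start = B x0.

Let P := poly_eval a m.
Let Q := poly_ddiff a m.
Let s := delta / 2.

Let s_pos : 0 < s.
Proof. unfold s; lra. Qed.

Definition local_preimage (z w : C) : C :=
  epsilon (inhabits z) (fun z' => Cmod (z' - z) < r / 2 /\ P z' = w).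

Lemma local_preimage_spec z w x : P z = B x -> Cmod (w - B x) < r * r / 6 ->
  Cmod (local_preimage z w - z) < r / 2 /\ P (local_preimage z w) = w.
Proof.
  intros Hz Hw; unfold local_preimage; apply epsilon_spec.
  apply (local_surj a m r z r_pos (controlled x z Hz)); now fold P; rewrite Hz.
Qed.

Definition grid (k : nat) : R := x0 + INR k * s.

Fixpoint node (k : nat) : C :=
  match k with O => z_start | S k => local_preimage (node k) (B (grid (S k))) end.

Lemma grid_step k : Rabs (grid (S k) - grid k) < delta.
Proof. pose proof s_pos; unfold grid; rewrite S_INR, Rabs_right; unfold s in *; lra. Qed.

Lemma node_on_fibre k : P (node k) = B (grid k).
Proof.
  induction k as [|k IH]; simpl.
  - unfold grid; simpl; rewrite Rmult_0_l, Rplus_0_r; exact z_start_spec.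
  - apply (local_preimage_spec _ _ _ IH), B_unif, grid_step.
Qed.

Lemma node_step k : Cmod (node (S k) - node k) < r / 2.
Proof. apply (local_preimage_spec _ _ _ (node_on_fibre k)), B_unif, grid_step. Qed.

(* [Z.to_nat] sends the negative cells left of [x0] to cell 0. *)
Definition cell (x : R) : nat := Z.to_nat (Int_part ((x - x0) / s)).

Lemma cell_bounds x :
  (x - x0) / s - 1 < INR (cell x) <= Rmax 0 ((x - x0) / s).
Proof.
  unfold cell; set (t := (x - x0) / s); destruct (base_Int_part t) as [H1 H2].
  destruct (Z_lt_le_dec (Int_part t) 0) as [Hneg|Hpos].
  - replace (Z.to_nat (Int_part t)) with 0%nat by lia.
    assert (Hle : (Int_part t <= -1)%Z) by lia; apply IZR_le in Hle.
    simpl; split; [lra | apply Rmax_l].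
  - rewrite INR_IZR_INZ, Z2Nat.id by exact Hpos.
    split; [lra | eapply Rle_trans; [exact H1 | apply Rmax_r]].
Qed.

Lemma cell_adjacent x y : Rabs (x - y) < s -> (cell y <= S (cell x))%nat.
Proof.
  intros Hxy; apply Rabs_def2 in Hxy; pose proof s_pos.
  destruct (cell_bounds x) as [Hx _]; destruct (cell_bounds y) as [_ Hy].
  assert (Ht : (y - x0) / s < (x - x0) / s + 1).
  { apply (Rmult_lt_reg_r s); [lra|]; field_simplify; lra. }
  pose proof (pos_INR (cell x)).
  assert (Hlt : INR (cell y) < INR (S (S (cell x))))
    by (rewrite !S_INR; unfold Rmax in Hy; destruct Rle_dec; lra).
  apply INR_lt in Hlt; lia.
Qed.

Lemma cell_left x : x <= x0 -> cell x = 0%nat.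
Proof.
  intros Hx; pose proof s_pos; destruct (cell_bounds x) as [_ Hc]; pose proof (pos_INR (cell x)).
  rewrite Rmax_left in Hc by (apply Rle_div_l; lra).
  apply INR_eq; simpl; lra.
Qed.

Lemma cell_grid x : x0 <= x -> grid (cell x) <= x < grid (cell x) + s.
Proof.
  intros Hx; pose proof s_pos; destruct (cell_bounds x) as [H1 H2].
  rewrite Rmax_right in H2 by (apply Rdiv_le_0_compat; lra).
  assert (Ht : (x - x0) / s * s = x - x0) by (field; lra).
  unfold grid; split; nra.
Qed.

Lemma B_near_cell_node x : Cmod (B x - B (grid (cell x))) < r * r / 6.
Proof.
  destruct (Rle_lt_dec x x0) as [Hx|Hx].
  - rewrite cell_left, (B_const_left x Hx) by exact Hx.
    unfold grid; simpl; rewrite Rmult_0_l, Rplus_0_r, Cmod_sub_diag; nra.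
  - apply B_unif; pose proof (cell_grid x (Rlt_le _ _ Hx)); rewrite Rabs_right; unfold s in *; lra.
Qed.

Definition lift (x : R) : C := local_preimage (node (cell x)) (B x).

Lemma lift_spec x : Cmod (lift x - node (cell x)) < r / 2 /\ P (lift x) = B x.
Proof.
  apply (local_preimage_spec _ _ _ (node_on_fibre (cell x))).
  apply B_near_cell_node.
Qed.

Lemma node_close k l : (l <= S k)%nat -> (k <= S l)%nat -> Cmod (node l - node k) < r / 2.
Proof.
  intros H1 H2.
  destruct (Nat.eq_dec l k) as [->|Hne]; [rewrite Cmod_sub_diag; lra|].
  destruct (Nat.eq_dec l (S k)) as [->|Hne']; [apply node_step|].
  replace k with (S l) by lia; rewrite Cmod_sub_sym; apply node_step.
Qed.

Lemma lift_near x y : Rabs (x - y) < s -> Cmod (lift y - node (cell x)) < r.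
Proof.
  intros Hxy.
  pose proof (cell_adjacent x y Hxy).
  pose proof (cell_adjacent y x ltac:(now rewrite Rabs_minus_sym)).
  pose proof (node_close (cell x) (cell y) H H0); pose proof (proj1 (lift_spec y)).
  pose proof (Cmod_sub_triangle (lift y) (node (cell y)) (node (cell x))); lra.
Qed.

Lemma lift_lipschitz x y : Rabs (x - y) < s ->
  2 * r / 3 * Cmod (lift x - lift y) <= Cmod (B x - B y).
Proof.
  intros Hxy; rewrite <- (proj2 (lift_spec x)), <- (proj2 (lift_spec y)).
  apply (local_lower_lipschitz a m r _ (controlled _ _ (node_on_fibre (cell x)))).
  - pose proof (proj1 (lift_spec x)); lra.
  - now apply lift_near.
Qed.

Lemma lift_continuous x : continuous lift x.
Proof.
  apply continuous_C_iff; intros eps.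
  assert (Hk : 0 < 2 * r / 3) by lra.
  destruct (proj1 (continuous_C_iff B x) (B_cont x)
              (mkposreal _ (Rmult_lt_0_compat _ _ Hk (cond_pos eps)))) as [d Hd].
  exists (mkposreal _ (Rmin_pos _ _ (cond_pos d) s_pos)); intros y Hy; simpl in Hy |- *.
  change (Rabs (y - x) < Rmin d s) in Hy.
  assert (HB : Cmod (B y - B x) < 2 * r / 3 * eps)
    by (apply Hd; change (Rabs (y - x) < d); eapply Rlt_le_trans; [exact Hy | apply Rmin_l]).
  assert (Hl := lift_lipschitz y x ltac:(eapply Rlt_le_trans; [exact Hy | apply Rmin_r])).
  apply (Rmult_lt_reg_l (2 * r / 3)); lra.
Qed.

Lemma ddiff_lift_neq0 x y : Rabs (x - y) < s -> Q (lift y) (lift x) <> 0%C.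
Proof.
  intros Hxy E.
  destruct (controlled _ _ (node_on_fibre (cell x))) as [Hlarge Hclose].
  specialize (Hclose (lift y) (lift x) (lift_near x y Hxy)
                ltac:(pose proof (proj1 (lift_spec x)); lra)).
  fold Q in Hclose, Hlarge; rewrite E in Hclose.
  replace (0 - Q (node (cell x)) (node (cell x)))%C
    with (- Q (node (cell x)) (node (cell x)))%C in Hclose by ring.
  rewrite Cmod_opp in Hclose; lra.
Qed.

Lemma is_derive_lift x (dB : C) :
  is_derive B x dB -> is_derive lift x (dB / Q (lift x) (lift x))%C.
Proof.
  intros HB.
  apply (is_derive_factor lift B (fun y => / Q (lift y) (lift x))%C); [exact HB| |].
  - apply continuous_Cinv.
    + apply continuous_poly_ddiff; [apply lift_continuous | apply continuous_const].
    + apply ddiff_lift_neq0; rewrite Rminus_diag, Rabs_R0; exact s_pos.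
  - exists (mkposreal _ s_pos); intros y Hy; change (Rabs (y - x) < s) in Hy.
    rewrite Rabs_minus_sym in Hy.
    pose proof (ddiff_lift_neq0 x y Hy) as Hq.
    rewrite <- (proj2 (lift_spec x)), <- (proj2 (lift_spec y)).
    unfold P, Q in *; rewrite poly_eval_sub; field; exact Hq.
Qed.

Theorem lift_properties :
  (forall x, P (lift x) = B x) /\ (forall x, Q (lift x) (lift x) <> 0%C) /\
  (forall x dB, is_derive B x dB -> is_derive lift x (dB / Q (lift x) (lift x))%C).
Proof.
  split; [|split].
  - intros x; apply lift_spec.
  - intros x; apply ddiff_lift_neq0; rewrite Rminus_diag, Rabs_R0; exact s_pos.
  - exact is_derive_lift.
Qed.

End Lifting.

(** * Smoothness of the lift *)

Lemma smooth_of_derive_closed (S : (R -> C) -> Prop) :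
  (forall f, S f -> exists f', S f' /\ forall x, is_derive f x (f' x)) ->
  forall f, S f -> smooth_RC f.
Proof.
  intros Hclosed.
  destruct (choice (fun (f f' : R -> C) => S f -> S f' /\ forall x, is_derive f x (f' x)))
    as [d Hd].
  { intros f; destruct (classic (S f)) as [Hf|Hf].
    - destruct (Hclosed f Hf) as [f' Hf']; now exists f'.
    - exists f; intros Hf'; contradiction. }
  intros f Hf; exists (fun n => Nat.iter n d f); split; [reflexivity|].
  assert (HS : forall n, S (Nat.iter n d f)) by (induction n; [exact Hf | apply (Hd _ IHn)]).
  intros n x; apply (Hd _ (HS n)).
Qed.

Section Smoothness.
Variables (D : nat -> R -> C) (g : R -> C) (b : nat -> C) (n : nat).
Hypothesis D_deriv : forall k x, is_derive (D k) x (D (S k) x).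
Hypothesis F_neq0 : forall x, poly_eval b n (g x) <> 0%C.
Hypothesis g_deriv : forall x, is_derive g x (D 1%nat x / poly_eval b n (g x))%C.

Inductive generated : (R -> C) -> Prop :=
  | gen_const (c : C) : generated (fun _ => c)
  | gen_D k : generated (D k)
  | gen_g : generated g
  | gen_inv : generated (fun x => / poly_eval b n (g x))%C
  | gen_plus f1 f2 : generated f1 -> generated f2 -> generated (fun x => f1 x + f2 x)%C
  | gen_mult f1 f2 : generated f1 -> generated f2 -> generated (fun x => f1 x * f2 x)%C
  | gen_ext f1 f2 : generated f1 -> (forall x, f1 x = f2 x) -> generated f2.

Lemma generated_sum_n (f : nat -> R -> C) k :
  (forall j, generated (f j)) -> generated (fun x => sum_n (fun j => f j x) k).
Proof.
  intros Hf; induction k as [|k IH].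
  - apply (gen_ext (f O)); [apply Hf | intros x; now rewrite sum_O].
  - apply (gen_ext (fun x => sum_n (fun j => f j x) k + f (S k) x))%C;
      [now apply gen_plus | intros x; now rewrite sum_Sn].
Qed.

Lemma generated_Cpow j : generated (fun x => Cpow (g x) j).
Proof. induction j as [|j IH]; [exact (gen_const 1) | now apply gen_mult; [apply gen_g|]]. Qed.

Lemma generated_poly_ddiff (c : nat -> C) k :
  generated (fun x => poly_ddiff c k (g x) (g x)).
Proof.
  apply (generated_sum_n (fun j x => c j * pow_ddiff j (g x) (g x)))%C; intros j.
  apply gen_mult; [apply gen_const|].
  induction j as [|j IH]; [exact (gen_const 0)|].
  apply gen_plus; [apply generated_Cpow | now apply gen_mult; [apply gen_g|]].
Qed.

Lemma generated_derive f : generated f ->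
  exists f', generated f' /\ forall x, is_derive f x (f' x).
Proof.
  induction 1 as [c|k| | |f1 f2 _ [f1' [G1 H1]] _ [f2' [G2 H2]]
                 |f1 f2 Gf1 [f1' [G1 H1]] Gf2 [f2' [G2 H2]]|f1 f2 _ [f' [G H]] E].
  - exists (fun _ => RtoC 0); split; [apply gen_const | intros; apply is_derive_C_const].
  - exists (D (S k)); split; [apply gen_D | apply D_deriv].
  - exists (fun x => D 1%nat x * / poly_eval b n (g x))%C; split; [|exact g_deriv].
    apply gen_mult; [apply gen_D | apply gen_inv].
  - set (F x := poly_eval b n (g x)).
    set (F' x := (D 1%nat x * / F x * poly_ddiff b n (g x) (g x))%C).
    exists (fun x => - F' x * / F x * / F x)%C; split.
    + apply gen_mult; [apply gen_mult; [|apply gen_inv]|apply gen_inv].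
      apply (gen_ext (fun x => RtoC (-1) * F' x))%C; [|intros x; ring].
      apply gen_mult; [apply gen_const|].
      apply gen_mult; [apply gen_mult; [apply gen_D | apply gen_inv] | apply generated_poly_ddiff].
    + intros x.
      replace (- F' x * / F x * / F x)%C with (- F' x / (F x * F x))%C by (field; apply F_neq0).
      apply is_derive_Cinv; [apply is_derive_poly_eval_comp, g_deriv | apply F_neq0].
  - exists (fun x => f1' x + f2' x)%C; split; [now apply gen_plus|].
    intros x; now apply is_derive_Cplus.
  - exists (fun x => f1' x * f2 x + f1 x * f2' x)%C; split.
    + apply gen_plus; now apply gen_mult.
    + intros x; now apply is_derive_Cmult.
  - exists f'; split; [exact G|]; intros x; exact (is_derive_C_ext _ _ x _ E (H x)).
Qed.

Lemma smooth_of_ode : smooth_RC g.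
Proof. exact (smooth_of_derive_closed generated generated_derive g gen_g). Qed.

End Smoothness.

Theorem lemma19 (a : nat -> C) (m : nat) (B : R -> C) :
  (1 <= m)%nat ->
  a m <> 0%C ->
  smooth_RC B ->
  const_outside_compact B ->
  (forall (x : R) (z : C),
      poly_eval (poly_deriv_coef a) (m - 1) z = 0%C -> B x <> poly_eval a m z) ->
  exists g : R -> C, smooth_RC g /\ forall x : R, poly_eval a m (g x) = B x.
Proof.
  intros Hm Ham [DB [HDB0 HDB]] [c [M Hconst]] Hcrit.
  destruct m as [|m]; [lia|]; replace (S m - 1)%nat with m in Hcrit by lia.
  subst B; set (B := DB O) in *.
  assert (HB : forall x, is_derive B x (DB 1%nat x)) by (intros x; apply HDB).
  assert (Hcont : forall x, continuous B x)
    by (intros x; exact (is_derive_continuous _ _ _ (HB x))).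
  assert (Hnoncrit : forall x z, poly_ddiff a (S m) z z = 0%C -> B x <> poly_eval a (S m) z)
    by (intros x z; rewrite poly_ddiff_diag; apply Hcrit).
  destruct (uniform_controlled_radius a m B c M Ham Hcont Hconst Hnoncrit) as [r [Hr Hctl]].
  destruct (const_outside_unif_cont B c M Hcont Hconst (mkposreal (r * r / 6) ltac:(nra)))
    as [delta Hunif].
  set (x0 := - (Rabs M + 1)).
  destruct (poly_eval_surj a m (B x0) Ham) as [z_start Hstart].
  destruct (lift_properties a (S m) B x0 r delta z_start Hr (cond_pos delta) Hcont
              (const_outside_left B c M Hconst) Hunif Hctl Hstart) as [Hfibre [Hreg Hderiv]].
  exists (lift a (S m) B x0 r delta z_start); split; [|exact Hfibre].
  apply (smooth_of_ode DB _ (poly_deriv_coef a) m HDB); intros x;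
    rewrite <- poly_ddiff_diag; [apply Hreg | apply Hderiv, HB].
Qed.
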